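(* Let $d\ge 1$. There is a constant $C>0$ depending only on $d$ such that for all $n\ge d+1$, every $\mathcal{F}$ and $B_1,\dots,B_m$ as in the context, and every $A\subseteq[n]$, the number of indices $i\in[m]$ with $B_i=A$ is at most $C$. Consequently, for each integer $0\le s\le d$, the number of indices $i\in[m]$ with $|B_i|=s$ is at most $C\binom{n}{s}$.
   Context: Let $\mathcal{F}=\{F_1,\dots,F_m\}\subseteq\binom{[n]}{d+1}$ consist of distinct sets and have VC-dimension at most $d$ (no $(d+1)$-set $S$ is shattered, i.e. no $S$ such that every $A\subseteq S$ equals $F\cap S$ for some $F\in\mathcal{F}$). For $i\in[m]$, call $B\subsetneq F_i$ admissible for $F_i$ if $F\cap F_i\neq B$ for every $F\in\mathcal{F}$ (admissible sets exist by the VC-dimension assumption). For each $i$, $B_i$ is a fixed admissible set for $F_i$ of maximum cardinality among all admissible sets for $F_i$. *)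

(* Ground set [n] is modelled by 'I_n; a family F_1..F_m
   by an indexing function F : 'I_m -> {set 'I_n}. *)
From mathcomp Require Import all_boot all_order.
Set Implicit Arguments. Unset Strict Implicit. Unset Printing Implicit Defensive.

Definition shattered (n m : nat) (F : 'I_m -> {set 'I_n}) (S : {set 'I_n}) : Prop :=
  forall A : {set 'I_n}, A \subset S -> exists i : 'I_m, F i :&: S = A.

Definition VCdim_le (n m : nat) (F : 'I_m -> {set 'I_n}) (d : nat) : Prop :=
  forall S : {set 'I_n}, #|S| = d.+1 -> ~ shattered F S.

Definition admissible (n m : nat) (F : 'I_m -> {set 'I_n}) (i : 'I_m)
  (B : {set 'I_n}) : Prop :=
  B \proper F i /\ forall j : 'I_m, F j :&: F i <> B.

Definition max_admissible (n m : nat) (F : 'I_m -> {set 'I_n}) (i : 'I_m)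
  (B : {set 'I_n}) : Prop :=
  admissible F i B /\ forall B' : {set 'I_n}, admissible F i B' -> #|B'| <= #|B|.

From mathcomp Require Import all_boot all_order.

Set Implicit Arguments.
Unset Strict Implicit.
Unset Printing Implicit Defensive.

(* Fix A and count the indices i with B i = A and F i containing a given set
   K with A \subset K.  If i is one of them and y \in F i :\: K, maximality of
   B i = A forces y |: A to be a trace F j :&: F i.  Every other such index i'
   has F j :&: F i' strictly larger than A, and an element z of the difference
   lies outside K, so K can be enlarged to z |: K in at most d + 1 ways.  When
   #|K| = d + 1 the index is unique, so there are at most (d + 1) ^ (d + 1)
   indices with B i = A. *)

Lemma card_bigcup_le (T I : finType) (P : {pred I}) (f : I -> {set T}) :
  #|\bigcup_(i in P) f i| <= \sum_(i in P) #|f i|.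
Proof.
elim/big_rec2: _ => [|i U s _ IH]; first by rewrite cards0.
by rewrite (leq_trans (leq_card_setU _ _)) // leq_add2l.
Qed.

Lemma card_preim_le (I T : finType) (f : I -> T) (P : {pred T}) (C : nat) :
  (forall t, #|[set i | f i == t]| <= C) -> #|[set i | f i \in P]| <= C * #|P|.
Proof.
move=> card_fibre.
have cover : [set i | f i \in P] \subset \bigcup_(t in P) [set i | f i == t].
  by apply/subsetP=> i; rewrite inE => Pfi; apply/bigcupP; exists (f i); rewrite ?inE.
rewrite (leq_trans (subset_leq_card cover)) // (leq_trans (card_bigcup_le _ _)) //.
by rewrite mulnC -sum_nat_const; apply: leq_sum => t _.
Qed.

Section MaxAdmissible.

Variables (d n m : nat) (F B : 'I_m -> {set 'I_n}).
Hypothesis injF : injective F.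
Hypothesis cardF : forall i, #|F i| = d.+1.
Hypothesis maxB : forall i, max_admissible F i (B i).

Lemma F_inj_subset i j : F i \subset F j -> i = j.
Proof.
by move=> sFij; apply: injF; apply/eqP; rewrite eqEcard sFij !cardF /=.
Qed.

Lemma B_subset_F i : B i \subset F i.
Proof. by case: (maxB i) => -[/proper_sub]. Qed.

Lemma trace_neq_B i j : F j :&: F i <> B i.
Proof. by case: (maxB i) => -[_]. Qed.

Lemma trace_setU1_B i y :
  y \in F i -> y \notin B i -> exists j, F j :&: F i = y |: B i.
Proof.
move=> yF yB; have sSF : y |: B i \subset F i by rewrite subUset sub1set yF B_subset_F.
have [eSF | neSF] := eqVneq (y |: B i) (F i); first by exists i; rewrite setIid.
case: (pickP (fun j => F j :&: F i == y |: B i)) => [j /eqP | not_traced].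
  by exists j.
have admS : admissible F i (y |: B i).
  split=> [|j ejS]; first by rewrite properEneq neSF.
  by move: (not_traced j); rewrite ejS eqxx.
by case: (maxB i) => _ /(_ _ admS); rewrite cardsU1 yB ltnn.
Qed.

Lemma trace_new_elem i j :
  B j \subset F i -> exists2 z, z \in F i :&: F j & z \notin B j.
Proof.
move=> sBF.
have : (F i :&: F j :\: B j) != set0.
  rewrite setD_eq0; apply/negP => sIB; apply: (@trace_neq_B j i).
  by apply/eqP; rewrite eqEsubset sIB subsetI sBF B_subset_F.
by case/set0Pn => z; rewrite in_setD => /andP[zB zI]; exists z.
Qed.

Definition above (A K : {set 'I_n}) := [set i | (B i == A) && (K \subset F i)].

Lemma card_above_full (A K : {set 'I_n}) : d.+1 <= #|K| -> #|above A K| <= 1.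
Proof.
move=> leK; apply/card_le1_eqP => i i'; rewrite !inE => /andP[_ sKi] /andP[_ sKi'].
have eKF j : K \subset F j -> K = F j.
  by move=> sKj; apply/eqP; rewrite eqEcard sKj cardF.
by apply: F_inj_subset; rewrite -(eKF _ sKi') sKi.
Qed.

Lemma above_cover (A K : {set 'I_n}) i :
  A \subset K -> i \in above A K -> ~~ (F i \subset K) ->
  exists j, above A K \subset \bigcup_(z in F j :\: K) above A (z |: K).
Proof.
move=> sAK; rewrite inE => /andP[/eqP BiA sKi] /subsetPn[y yF yK].
have yB : y \notin B i by rewrite BiA; apply: contra yK; apply: (subsetP sAK).
have [j eFjS] := trace_setU1_B yF yB.
exists j; apply/subsetP => i'; rewrite inE => /andP[/eqP Bi'A sKi'].
have sBFj : B i' \subset F j.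
  by rewrite Bi'A -BiA (subset_trans _ (subsetIl _ (F i))) // eFjS subsetUr.
have [z /setIP[zFj zFi'] zB] := trace_new_elem sBFj.
have zK : z \notin K.
  apply: contraNN yK => zK.
  have : z \in F j :&: F i by rewrite inE zFj (subsetP sKi).
  by rewrite eFjS in_setU1 BiA -Bi'A (negbTE zB) orbF => /eqP <-.
apply/bigcupP; exists z; first by rewrite in_setD zK zFj.
by rewrite inE Bi'A eqxx subUset sub1set zFi' sKi'.
Qed.

Lemma card_above (A K : {set 'I_n}) r :
  A \subset K -> d.+1 - #|K| <= r -> #|above A K| <= d.+1 ^ r.
Proof.
elim: r K => [|r IH] K sAK leKr.
  by rewrite (card_above_full A) // -subn_eq0 -leqn0.
have [leK | ltK] := leqP d.+1 #|K|.
  by rewrite (leq_trans (card_above_full A leK)) // expn_gt0.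
have [-> | [i Ai]] := set_0Vmem (above A K); first by rewrite cards0.
have nsFK : ~~ (F i \subset K).
  by apply: contraTN ltK => sFK; rewrite -leqNgt -(cardF i) subset_leq_card.
have [j cover] := above_cover sAK Ai nsFK.
rewrite (leq_trans (subset_leq_card cover)) // (leq_trans (card_bigcup_le _ _)) //.
apply: (@leq_trans (\sum_(z in F j :\: K) d.+1 ^ r)).
  apply: leq_sum => z; rewrite in_setD => /andP[zK _]; apply: IH.
    exact: subset_trans sAK (subsetUr _ _).
  by rewrite cardsU1 zK subnS -subn1 leq_subLR add1n.
rewrite sum_nat_const expnS leq_mul2r; apply/orP; right.
by rewrite -(cardF j) subset_leq_card ?subsetDl.
Qed.

Lemma card_B_eq (A : {set 'I_n}) : #|[set i | B i == A]| <= d.+1 ^ d.+1.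
Proof.
rewrite (leq_trans _ (card_above (subxx A) (leq_subr #|A| d.+1))) //.
by apply/subset_leq_card/subsetP => i; rewrite !inE => /eqP <-; rewrite eqxx B_subset_F.
Qed.

End MaxAdmissible.

Theorem claim3p2 (d : nat) (hd : 1 <= d) :
  exists C : nat, 0 < C /\
    forall (n m : nat) (F : 'I_m -> {set 'I_n}) (B : 'I_m -> {set 'I_n}),
      d.+1 <= n ->
      injective F ->
      (forall i, #|F i| = d.+1) ->
      VCdim_le F d ->
      (forall i, max_admissible F i (B i)) ->
      (forall A : {set 'I_n}, #|[set i | B i == A]| <= C) /\
      (forall s : nat, s <= d -> #|[set i | #|B i| == s]| <= C * 'C(n, s)).
Proof.
exists (d.+1 ^ d.+1); split; first by rewrite expn_gt0.
(* The VC-dimension bound only serves to make admissible sets exist, which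
   [max_admissible] already provides. *)
move=> n m F B _ injF cardF _ maxB.
have card_fibre := card_B_eq injF cardF maxB.
split=> // s _.
rewrite -[n in 'C(n, s)]card_ord -card_draws.
apply: leq_trans (card_preim_le _ card_fibre).
by apply/eq_leq/eq_card => i; rewrite !inE.
Qed.
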